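(* Let $q$ be a prime power, let $n_1,n_2,n_3,n_4$ be positive integers with $n=n_1+n_2+n_3+n_4$, and let $G=U_{n_1,n_2,n_3,n_4}=1+\mathfrak{g}$ be the unipotent radical of the standard parabolic subgroup of $\mathrm{GL}_n(\mathbb{F}_q)$ attached to the block sizes $(n_1,n_2,n_3,n_4)$. Here $\mathfrak{g}$ is the algebra of $n\times n$ matrices over $\mathbb{F}_q$ which, written in $4\times 4$ block form $(X_{ij})$ with $X_{ij}$ of size $n_i\times n_j$, satisfy $X_{ij}=0$ whenever $i\ge j$. Then $G$ is of good type: for every $S\in\mathfrak{g}^t$, the linear form $\lambda_S\in\mathfrak{g}^*$, $\lambda_S(X)=\operatorname{tr}(SX)$, admits an associative polarization.
   Context: $\mathfrak{g}^t=\{X^t: X\in\mathfrak{g}\}$. For $\lambda\in\mathfrak{g}^*$, define the skew-symmetric bilinear form $B_\lambda(x,y)=\lambda(xy-yx)$ on $\mathfrak{g}$. A subspace $\mathfrak{p}\subseteq\mathfrak{g}$ is isotropic if $B_\lambda(x,y)=0$ for all $x,y\in\mathfrak{p}$, and a polarization of $\lambda$ is a maximal isotropic subspace of $\mathfrak{g}$ for $B_\lambda$. An associative polarization of $\lambda$ is a polarization $\mathfrak{p}$ that is an associative subalgebra of $\mathfrak{g}$ and satisfies $\lambda(\mathfrak{p}^2)=0$, where $\mathfrak{p}^2$ is the span of products $xy$ with $x,y\in\mathfrak{p}$. A pattern group $G=1+\mathfrak{g}$ over $\mathbb{F}_q$ is said to be of good type if $\lambda_S$ admits an associative polarization for every $S\in\mathfrak{g}^t$.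 *)

From HB Require Import structures.
From mathcomp Require Import all_boot all_order all_algebra all_field.
Set Implicit Arguments. Unset Strict Implicit. Unset Printing Implicit Defensive.
Import GRing.Theory.
Local Open Scope ring_scope.

Section Defs.
Variables (F : fieldType) (n : nat).
Notation mat := 'M[F]_(n, n).

Definition lamS (S X : mat) : F := \tr (S *m X).

Definition Blam (lam : mat -> F) (x y : mat) : F := lam (x *m y - y *m x).

Definition subspace_of (g : mat -> Prop) (p : {vspace mat}) : Prop :=
  forall x, x \in p -> g x.

Definition isotropic (lam : mat -> F) (p : {vspace mat}) : Prop :=
  forall x y, x \in p -> y \in p -> Blam lam x y = 0.

Definition polarization (g : mat -> Prop) (lam : mat -> F) (p : {vspace mat}) :=
  [/\ subspace_of g p, isotropic lam p &
      forall p' : {vspace mat}, subspace_of g p' -> isotropic lam p' ->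
        (p <= p')%VS -> p' = p].

Definition assoc_polarization (g : mat -> Prop) (lam : mat -> F) (p : {vspace mat}) :=
  [/\ polarization g lam p,
      (forall x y, x \in p -> y \in p -> x *m y \in p) &
      (forall x y, x \in p -> y \in p -> lam (x *m y) = 0)].

Definition good_type (g : mat -> Prop) : Prop :=
  forall S : mat, (exists X, g X /\ S = X^T) ->
    exists p : {vspace mat}, assoc_polarization g (lamS S) p.
End Defs.

Definition blk4 (n1 n2 n3 n4 : nat) (k : nat) : nat :=
  if (k < n1)%N then 0%N
  else if (k < n1 + n2)%N then 1%N
  else if (k < n1 + n2 + n3)%N then 2%N
  else 3%N.

Definition u4alg (F : fieldType) (n1 n2 n3 n4 : nat)
  (X : 'M[F]_(n1 + n2 + n3 + n4, n1 + n2 + n3 + n4)) : Prop :=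
  forall i j : 'I_(n1 + n2 + n3 + n4),
    (blk4 n1 n2 n3 n4 j <= blk4 n1 n2 n3 n4 i)%N -> X i j = 0.

(* Number the diagonal blocks 0..3, let g2 = g g (the blocks (0,2), (0,3), (1,3)) and let
   E_b be the diagonal idempotent of block b.  For lam = lam_S put
     rad = { x in g | lam (x g2) = lam (g2 x) = 0 },
     pol = { x in rad | lam (W x) = 0 for W in rad inside block row 0 and
                        lam (x W) = 0 for W in rad inside block column 3 }.
   As g2 g2 = 0, g2 lies in pol, hence pol pol <= g g = g2 <= pol.  A product of two elements
   of g only passes through the middle blocks, x y = (x E_1) y + x (E_2 y), and for x, y in rad
   the factors x E_1 and E_2 y lie in rad, in row 0 and column 3 respectively; so
   lam (pol pol) = 0.  Conversely, if x in g is lam-orthogonal to pol, testing it against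
   E_1 g2 and g2 E_2 (inside g2) puts x in rad, and testing it against the row-0 and column-3
   parts of rad (inside pol) puts x in pol: pol is maximal isotropic. *)

From HB Require Import structures.
From mathcomp Require Import all_boot all_order all_algebra all_field.
From Stdlib Require Import ClassicalEpsilon.
Set Implicit Arguments. Unset Strict Implicit. Unset Printing Implicit Defensive.
Import GRing.Theory.
Local Open Scope ring_scope.

Section LamSLinear.
Variables (F : fieldType) (n : nat) (S : 'M[F]_n).

Lemma lamS0 : lamS S 0 = 0.
Proof. by rewrite /lamS mulmx0 mxtrace0. Qed.

Lemma lamSD A B : lamS S (A + B) = lamS S A + lamS S B.
Proof. by rewrite /lamS mulmxDr mxtraceD. Qed.

Lemma lamSB A B : lamS S (A - B) = lamS S A - lamS S B.
Proof. by rewrite /lamS mulmxBr raddfB. Qed.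

Lemma lamSZ c A : lamS S (c *: A) = c * lamS S A.
Proof. by rewrite /lamS -scalemxAr mxtraceZ. Qed.

End LamSLinear.

Lemma vspace_of_pred (F : finFieldType) m n (P : 'M[F]_(m, n) -> Prop) :
  P 0 -> (forall c x y, P x -> P y -> P (c *: x + y)) ->
  exists U : {vspace 'M[F]_(m, n)}, forall x, x \in U <-> P x.
Proof.
move=> P0 P_lin.
pose s := [seq x <- enum 'M[F]_(m, n) |
           if excluded_middle_informative (P x) then true else false].
have Ps x : x \in s <-> P x.
  by rewrite mem_filter mem_enum andbT; case: excluded_middle_informative.
exists <<s>>%VS => x; split=> [|/Ps]; last exact: memv_span.
move/(@coord_span _ _ _ (in_tuple s))->; apply: (big_ind P) => // [y z Py Pz|i _].
  by rewrite -[y]scale1r; apply: P_lin.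
by rewrite -[_ *: _]addr0; apply: P_lin P0; apply/Ps/mem_nth.
Qed.

Section BlockSupport.
Variables (R : pzRingType) (n k : nat) (blk : 'I_n -> nat).
Hypothesis blk_lt : forall i, (blk i < k)%N.

Definition block_supp (K : rel nat) (X : 'M[R]_n) :=
  forall r s, ~~ K (blk r) (blk s) -> X r s = 0.

Definition block_proj (b : nat) : 'M[R]_n := diag_mx (\row_i (blk i == b)%:R).

Lemma block_supp_sub (K K' : rel nat) X :
  (forall a b, (a < k)%N -> (b < k)%N -> K a b -> K' a b) ->
  block_supp K X -> block_supp K' X.
Proof.
move=> sKK' sX r s nK'; apply: sX; apply: contra nK' => Krs.
exact: sKK' (blk_lt r) (blk_lt s) Krs.
Qed.

Lemma block_supp_lin (K : rel nat) c X Y :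
  block_supp K X -> block_supp K Y -> block_supp K (c *: X + Y).
Proof. by move=> sX sY r s nK; rewrite !mxE sX // sY // mulr0 addr0. Qed.

Lemma block_supp_mul (K1 K2 K3 : rel nat) X Y :
  (forall a b c, (a < k)%N -> (b < k)%N -> (c < k)%N -> K1 a b -> K2 b c -> K3 a c) ->
  block_supp K1 X -> block_supp K2 Y -> block_supp K3 (X *m Y).
Proof.
move=> K123 sX sY r s nK; rewrite mxE big1 // => j _.
have [K1rj|] := boolP (K1 (blk r) (blk j)); last by move/sX->; rewrite mul0r.
have [K2js|] := boolP (K2 (blk j) (blk s)); last by move/sY->; rewrite mulr0.
by rewrite (K123 _ _ _ (blk_lt r) (blk_lt j) (blk_lt s) K1rj K2js) in nK.
Qed.

Lemma block_mul_eq0 (K1 K2 : rel nat) X Y :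
  (forall a b c, (a < k)%N -> (b < k)%N -> (c < k)%N -> K1 a b -> K2 b c -> false) ->
  block_supp K1 X -> block_supp K2 Y -> X *m Y = 0.
Proof.
move=> K12 sX sY; apply/matrixP => r s; rewrite [RHS]mxE.
exact: (block_supp_mul (K3 := fun _ _ => false) K12 sX sY).
Qed.

Lemma block_mul_mid (b0 : nat) (K1 K2 : rel nat) X Y :
  (forall a b c, (a < k)%N -> (b < k)%N -> (c < k)%N -> K1 a b -> K2 b c -> b == b0) ->
  block_supp K1 X -> block_supp K2 Y -> X *m block_proj b0 *m Y = X *m Y.
Proof.
move=> K12 sX sY; apply/matrixP => r s; rewrite !mxE; apply: eq_bigr => j _.
rewrite mul_mx_diag !mxE; have [_|ne_j] := boolP (blk j == b0); first by rewrite mulr1.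
rewrite mulr0 mul0r.
have [K1rj|] := boolP (K1 (blk r) (blk j)); last by move/sX->; rewrite mul0r.
have [K2js|] := boolP (K2 (blk j) (blk s)); last by move/sY->; rewrite mulr0.
by rewrite (K12 _ _ _ (blk_lt r) (blk_lt j) (blk_lt s) K1rj K2js) in ne_j.
Qed.

Lemma block_supp_proj b0 :
  block_supp (fun a b => (a == b0) && (b == b0)) (block_proj b0).
Proof.
move=> r s; rewrite !mxE; have [<-|_] := eqVneq r s; last by rewrite mulr0n.
by rewrite andbb => /negbTE->.
Qed.

Lemma block_supp_projl b0 (K : rel nat) X :
  block_supp K X -> block_supp (fun a b => (a == b0) && K a b) (block_proj b0 *m X).
Proof.
move=> sX r s; rewrite mul_diag_mx !mxE; have [_|_] := eqVneq (blk r) b0.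
  by move=> /sX->; rewrite mulr0.
by rewrite mul0r.
Qed.

Lemma block_supp_projr b0 (K : rel nat) X :
  block_supp K X -> block_supp (fun a b => K a b && (b == b0)) (X *m block_proj b0).
Proof.
move=> sX r s; rewrite mul_mx_diag !mxE; have [_|_] := eqVneq (blk s) b0.
  by rewrite andbT => /sX->; rewrite mul0r.
by rewrite mulr0.
Qed.

Lemma sum_block_proj : \sum_(b < k) block_proj b = 1%:M.
Proof.
apply/matrixP => r s; rewrite summxE !mxE.
under eq_bigr do rewrite !mxE.
have [_|_] := eqVneq r s; last by rewrite big1 // => b _; rewrite mulr0n.
rewrite (bigD1 (Ordinal (blk_lt r))) //= eqxx big1 ?addr0 // => b.
by rewrite -val_eqE /= eq_sym => /negbTE->.
Qed.

Lemma mulmx_block_split (X Y : 'M[R]_n) :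
  X *m Y = \sum_(b < k) X *m block_proj b *m Y.
Proof. by rewrite -{1}(mulmx1 X) -sum_block_proj mulmx_sumr mulmx_suml. Qed.

End BlockSupport.

Arguments block_proj {R n} blk b.
Arguments block_supp_proj {R n blk} b0.
Arguments block_supp_projl {R n blk} b0 [K X].
Arguments block_supp_projr {R n blk} b0 [K X].

Lemma blk4_lt4 n1 n2 n3 n4 m : (blk4 n1 n2 n3 n4 m < 4)%N.
Proof. by rewrite /blk4; repeat case: ifP. Qed.

Definition g_blocks (a b : nat) := (a < b)%N.
Definition g2_blocks (a b : nat) := (a.+1 < b)%N.
Definition row0_blocks (a b : nat) := (a == 0)%N && (0 < b)%N.
Definition col3_blocks (a b : nat) := (b == 3)%N && (a < 3)%N.

Ltac block_cases := rewrite /g_blocks /g2_blocks /row0_blocks /col3_blocks;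
  move=> [|[|[|[|?]]]] [|[|[|[|?]]]] //; try move=> [|[|[|[|?]]]] //.

Section FourBlocks.
Variables (F : fieldType) (n1 n2 n3 n4 : nat).
Local Notation N := (n1 + n2 + n3 + n4)%N.
Local Notation M := 'M[F]_N.

Let blk (i : 'I_N) := blk4 n1 n2 n3 n4 i.
Let blk_lt4 (i : 'I_N) : (blk i < 4)%N := blk4_lt4 n1 n2 n3 n4 i.
Local Notation supp := (@block_supp F N blk).
Local Notation E := (@block_proj F N blk).

Definition in_g (X : M) := supp g_blocks X.
Definition in_g2 (X : M) := supp g2_blocks X.

Lemma u4algE X : u4alg X <-> in_g X.
Proof.
split=> gX r s; first by rewrite -leqNgt; apply: gX.
by move=> le_sr; apply: gX; rewrite -leqNgt.
Qed.

Lemma mulmx_g_split X Y : in_g X -> in_g Y -> X *m Y = X *m E 1 *m Y + X *m (E 2 *m Y).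
Proof.
move=> gX gY; rewrite [LHS](mulmx_block_split blk_lt4) !big_ord_recr big_ord0 /=.
have X0 : X *m E 0 = 0.
  by apply: (block_mul_eq0 blk_lt4) gX (block_supp_proj 0); block_cases.
have Y3 : E 3 *m Y = 0.
  by apply: (block_mul_eq0 blk_lt4) (block_supp_proj 3) gY; block_cases.
by rewrite X0 -[X *m E 3 *m Y]mulmxA Y3 mul0mx mulmx0 !add0r addr0 mulmxA.
Qed.

Lemma row0_mulE1 X : in_g X -> supp row0_blocks (X *m E 1).
Proof.
by move=> gX; apply: (block_supp_sub blk_lt4) (block_supp_projr 1 gX); block_cases.
Qed.

Lemma col3_E2mul Y : in_g Y -> supp col3_blocks (E 2 *m Y).
Proof.
by move=> gY; apply: (block_supp_sub blk_lt4) (block_supp_projl 2 gY); block_cases.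
Qed.

Lemma in_g_mul X Y : in_g X -> in_g Y -> in_g2 (X *m Y).
Proof. by move=> gX gY; apply: (block_supp_mul blk_lt4) gX gY; block_cases. Qed.

Lemma g2_mul_eq0 X Y : in_g2 X -> in_g2 Y -> X *m Y = 0.
Proof. by move=> g2X g2Y; apply: (block_mul_eq0 blk_lt4) g2X g2Y; block_cases. Qed.

Variable S : M.
Local Notation lam := (lamS S).

Definition in_rad (X : M) :=
  in_g X /\ forall Z, in_g2 Z -> lam (X *m Z) = 0 /\ lam (Z *m X) = 0.

Definition in_pol (X : M) := [/\ in_rad X,
  forall W, in_rad W -> supp row0_blocks W -> lam (W *m X) = 0 &
  forall W, in_rad W -> supp col3_blocks W -> lam (X *m W) = 0].

Lemma in_rad_mulE1 X : in_rad X -> in_rad (X *m E 1).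
Proof.
move=> [gX radX]; have r0 := row0_mulE1 gX.
split=> [|Z g2Z]; first by apply: (block_supp_sub blk_lt4) r0; block_cases.
rewrite (block_mul_mid blk_lt4 _ gX g2Z); last by block_cases.
rewrite (block_mul_eq0 blk_lt4 _ g2Z r0) ?lamS0; last by block_cases.
by have [] := radX Z g2Z.
Qed.

Lemma in_rad_E2mul Y : in_rad Y -> in_rad (E 2 *m Y).
Proof.
move=> [gY radY]; have c3 := col3_E2mul gY.
split=> [|Z g2Z]; first by apply: (block_supp_sub blk_lt4) c3; block_cases.
rewrite mulmxA (block_mul_mid blk_lt4 _ g2Z gY); last by block_cases.
rewrite (block_mul_eq0 blk_lt4 _ c3 g2Z) ?lamS0; last by block_cases.
by have [] := radY Z g2Z.
Qed.

Lemma in_g2_pol Z : in_g2 Z -> in_pol Z.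
Proof.
move=> g2Z; have radZ : in_rad Z.
  split=> [|Z' g2Z']; first by apply: (block_supp_sub blk_lt4) g2Z; block_cases.
  by rewrite !g2_mul_eq0 ?lamS0.
by split=> // W [_ radW] _; have [] := radW Z g2Z.
Qed.

Lemma in_pol_mul X Y : in_pol X -> in_pol Y -> in_pol (X *m Y).
Proof. by move=> [[gX _] _ _] [[gY _] _ _]; apply/in_g2_pol/in_g_mul. Qed.

Lemma lam_row0_col3 W1 W2 :
  in_rad W1 -> supp row0_blocks W1 -> in_rad W2 -> supp col3_blocks W2 ->
  lam (W1 *m W2) = 0.
Proof.
move=> [gW1 rad1] r0 [gW2 rad2] c3.
have g2E1W2 : in_g2 (E 1 *m W2).
  by apply: (block_supp_sub blk_lt4) (block_supp_projl 1 c3); block_cases.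
have g2W1E2 : in_g2 (W1 *m E 2).
  by apply: (block_supp_sub blk_lt4) (block_supp_projr 2 r0); block_cases.
rewrite mulmx_g_split // -[W1 *m E 1 *m W2]mulmxA [W1 *m (E 2 *m W2)]mulmxA lamSD.
by rewrite (rad1 _ g2E1W2).1 (rad2 _ g2W1E2).2 addr0.
Qed.

Lemma lam_pol_mul X Y : in_pol X -> in_pol Y -> lam (X *m Y) = 0.
Proof.
move=> [radX _ colX] [radY rowY _]; have [gX _] := radX; have [gY _] := radY.
rewrite mulmx_g_split // lamSD (rowY _ (in_rad_mulE1 radX) (row0_mulE1 gX)).
by rewrite (colX _ (in_rad_E2mul radY) (col3_E2mul gY)) addr0.
Qed.

Lemma in_rad_row0_pol W : in_rad W -> supp row0_blocks W -> in_pol W.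
Proof.
move=> radW r0; split=> // [W' _ r0' | W' radW' c3']; last exact: lam_row0_col3.
by rewrite (block_mul_eq0 blk_lt4 _ r0' r0) ?lamS0 //; block_cases.
Qed.

Lemma in_rad_col3_pol W : in_rad W -> supp col3_blocks W -> in_pol W.
Proof.
move=> radW c3; split=> // [W' radW' r0' | W' _ c3']; first exact: lam_row0_col3.
by rewrite (block_mul_eq0 blk_lt4 _ c3 c3') ?lamS0 //; block_cases.
Qed.

Lemma in_pol0 : in_pol 0.
Proof. by apply: in_g2_pol => r s _; rewrite mxE. Qed.

Lemma in_pol_lin c X Y : in_pol X -> in_pol Y -> in_pol (c *: X + Y).
Proof.
move=> [[gX radX] rowX colX] [[gY radY] rowY colY]; split; first split.
- exact: block_supp_lin.
- move=> Z g2Z; have [XZ ZX] := radX Z g2Z; have [YZ ZY] := radY Z g2Z.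
  rewrite mulmxDl mulmxDr -scalemxAl -scalemxAr !lamSD !lamSZ.
  by rewrite XZ ZX YZ ZY mulr0 addr0.
- by move=> W radW r0; rewrite mulmxDr -scalemxAr lamSD lamSZ rowX // rowY // mulr0 addr0.
- by move=> W radW c3; rewrite mulmxDl -scalemxAl lamSD lamSZ colX // colY // mulr0 addr0.
Qed.

Section Orthogonal.
Variable x : M.
Hypotheses (gx : in_g x) (x_perp : forall y, in_pol y -> Blam lam x y = 0).

Lemma perp_pol_rad : in_rad x.
Proof.
split=> // Z g2Z; split.
  have g2E1Z : in_g2 (E 1 *m Z).
    by apply: (block_supp_sub blk_lt4) (block_supp_projl 1 g2Z); block_cases.
  have := x_perp (in_g2_pol g2E1Z); rewrite /Blam lamSB mulmxA.
  rewrite (block_mul_mid blk_lt4 _ gx g2Z); last by block_cases.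
  rewrite (block_mul_eq0 blk_lt4 _ (block_supp_projl 1 g2Z) gx) ?lamS0 ?subr0 //.
  by block_cases.
have g2ZE2 : in_g2 (Z *m E 2).
  by apply: (block_supp_sub blk_lt4) (block_supp_projr 2 g2Z); block_cases.
have := x_perp (in_g2_pol g2ZE2); rewrite /Blam lamSB.
rewrite (block_mul_mid blk_lt4 _ g2Z gx); last by block_cases.
rewrite (block_mul_eq0 blk_lt4 _ gx (block_supp_projr 2 g2Z)) ?lamS0 ?sub0r;
  last by block_cases.
by move/eqP; rewrite oppr_eq0 => /eqP.
Qed.

Lemma perp_pol : in_pol x.
Proof.
have radx := perp_pol_rad; split=> // W radW.
  move=> r0; have := x_perp (in_rad_row0_pol radW r0); rewrite /Blam lamSB.
  rewrite (block_mul_eq0 blk_lt4 _ gx r0) ?lamS0 ?sub0r; last by block_cases.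
  by move/eqP; rewrite oppr_eq0 => /eqP.
move=> c3; have := x_perp (in_rad_col3_pol radW c3); rewrite /Blam lamSB.
by rewrite (block_mul_eq0 blk_lt4 _ c3 gx) ?lamS0 ?subr0 //; block_cases.
Qed.

End Orthogonal.

End FourBlocks.

Theorem theorem3p2 (F : finFieldType) (n1 n2 n3 n4 : nat) :
  (0 < n1)%N -> (0 < n2)%N -> (0 < n3)%N -> (0 < n4)%N ->
  good_type (@u4alg F n1 n2 n3 n4).
Proof.
move=> _ _ _ _ S _.
have [p memp] := vspace_of_pred (in_pol0 S) (in_pol_lin (S := S)).
exists p; split; first split.
- by move=> x /memp [[gx _] _ _]; apply/u4algE.
- by move=> x y /memp Px /memp Py; rewrite /Blam lamSB !lam_pol_mul // subrr.
- move=> p' p'_g p'_iso le_pp'; apply/eqP; rewrite eqEsubv le_pp' andbT.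
  apply/subvP => x p'x; apply/memp/perp_pol; first exact/u4algE/p'_g.
  by move=> y /memp py; apply: p'_iso (subvP le_pp' _ py).
- by move=> x y /memp Px /memp Py; apply/memp/in_pol_mul.
- by move=> x y /memp Px /memp Py; apply: lam_pol_mul.
Qed.
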